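(* Let $f\colon[0,\infty)\to[0,\infty)$ be an unbounded modulus, let $(X,\rho)$ be a metric space, let $A\in CL(X)$ and let $(A_k)\subset CL(X)$ be such that $(A_k)$ is $f$-Wijsman statistically convergent to $A$. Then $(A_k)$ is Wijsman statistically convergent to $A$.
   Context: A modulus is a function $f\colon[0,\infty)\to[0,\infty)$ such that $f(x)=0$ iff $x=0$, $f(x+y)\le f(x)+f(y)$ for all $x,y\ge 0$, $f$ is increasing, and $f$ is continuous. $CL(X)$ denotes the set of all non-empty closed subsets of $(X,\rho)$, and for $x\in X$ and non-empty $B\subseteq X$, $d(x,B)=\inf_{y\in B}\rho(x,y)$. For $K\subseteq\mathbb N$ the natural density is $d(K)=\lim_{n\to\infty}\frac1n|\{k\le n: k\in K\}|$, and for an unbounded modulus $f$ the $f$-density is $d^f(K)=\lim_{n\to\infty}\frac{f(|\{k\le n:k\in K\}|)}{f(n)}$ (when the limit exists). A real sequence $(x_k)$ is statistically convergent (resp. $f$-statistically convergent) to $l$ if for every $\varepsilon>0$ the set $\{k:|x_k-l|\ge\varepsilon\}$ has natural density $0$ (resp. $f$-density $0$). $(A_k)\subset CL(X)$ is Wijsman statistically convergent (resp. $f$-Wijsman statistically convergent) to $A\in CL(X)$ if for every $x\in X$ the sequence $(d(x,A_k))$ is statistically convergent (resp. $f$-statistically convergent) to $d(x,A)$. *)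

From HB Require Import structures.
From mathcomp Require Import all_boot all_order all_algebra.
From mathcomp Require Import all_classical all_reals all_analysis.
Set Implicit Arguments. Unset Strict Implicit. Unset Printing Implicit Defensive.
Import Order.TTheory GRing.Theory Num.Theory.
Import numFieldNormedType.Exports.
Local Open Scope classical_set_scope.
Local Open Scope ring_scope.

(* A modulus f : [0,oo) -> [0,oo) (f is given as a function on R; only its
   values on [0,oo) matter). "increasing" is read as nondecreasing. *)
Definition modulus (R : realType) (f : R -> R) : Prop :=
  [/\ (forall x, 0 <= x -> 0 <= f x),
      (forall x, 0 <= x -> (f x = 0 <-> x = 0)),
      (forall x y, 0 <= x -> 0 <= y -> f (x + y) <= f x + f y),
      (forall x y, 0 <= x -> x <= y -> f x <= f y) &
      {within [set x : R | 0 <= x], continuous f}].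

Definition unbounded_modulus (R : realType) (f : R -> R) : Prop :=
  modulus f /\ ~ (exists M : R, forall x, 0 <= x -> f x <= M).

Definition is_metric (R : realType) (X : Type) (rho : X -> X -> R) : Prop :=
  [/\ (forall x y, 0 <= rho x y),
      (forall x y, rho x y = 0 <-> x = y),
      (forall x y, rho x y = rho y x) &
      (forall x y z, rho x z <= rho x y + rho y z)].

Definition mclosed (R : realType) (X : Type) (rho : X -> X -> R) (B : set X) :=
  forall x, ~ B x -> exists e : R, 0 < e /\ forall y, rho x y < e -> ~ B y.

Definition CL (R : realType) (X : Type) (rho : X -> X -> R) (B : set X) :=
  B !=set0 /\ mclosed rho B.

Definition dist (R : realType) (X : Type) (rho : X -> X -> R) (x : X) (B : set X) : R :=
  inf [set rho x y | y in B].

Definition count_upto (K : set nat) (n : nat) : nat :=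
  count (fun k => `[< K k >]) (iota 1 n).

Definition natural_density_zero (R : realType) (K : set nat) : Prop :=
  (fun n : nat => (count_upto K n)%:R / (n%:R : R)) @ \oo --> (0 : R).

Definition f_density_zero (R : realType) (f : R -> R) (K : set nat) : Prop :=
  (fun n : nat => f (count_upto K n)%:R / f n%:R) @ \oo --> (0 : R).

(* the sequence x is indexed by N = {1,2,...} via x k for k >= 1 *)
Definition stat_cvg (R : realType) (x : nat -> R) (l : R) : Prop :=
  forall eps : R, 0 < eps -> natural_density_zero R [set k | eps <= `|x k - l|].

Definition f_stat_cvg (R : realType) (f : R -> R) (x : nat -> R) (l : R) : Prop :=
  forall eps : R, 0 < eps -> f_density_zero f [set k | eps <= `|x k - l|].

Definition wijsman_stat (R : realType) (X : Type) (rho : X -> X -> R)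
  (As : nat -> set X) (A : set X) : Prop :=
  forall x : X, stat_cvg (fun k => dist rho x (As k)) (dist rho x A).

Definition f_wijsman_stat (R : realType) (f : R -> R) (X : Type) (rho : X -> X -> R)
  (As : nat -> set X) (A : set X) : Prop :=
  forall x : X, f_stat_cvg f (fun k => dist rho x (As k)) (dist rho x A).

From HB Require Import structures.
From mathcomp Require Import all_boot all_order all_algebra.
From mathcomp Require Import all_classical all_reals all_analysis.
Local Open Scope classical_set_scope.
Local Open Scope ring_scope.
Import Order.TTheory GRing.Theory Num.Theory.

(* Subadditivity gives [f (p x) <= p f x], so if the counting ratio [c / n]
   is at least [1 / p] then monotonicity gives [f n <= f (p c) <= p f c],
   i.e. the f-ratio [f c / f n] is at least [1 / p] as well.  Hence f-density
   zero implies natural density zero, set by set, and f-statistical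
   convergence implies statistical convergence. *)

Section Modulus.

Variables (R : realType) (f : R -> R).
Hypothesis hf : modulus f.

Lemma modulus_mulrn_le (x : R) (p : nat) : 0 <= x -> f (x *+ p) <= f x *+ p.
Proof.
case: hf => _ f_eq0 fD _ _ x_ge0; elim: p => [|p IHp].
  by rewrite !mulr0n; case: (f_eq0 0 (lexx 0)) => _ ->.
rewrite !mulrS; apply: le_trans (fD _ _ x_ge0 _) _; first exact: mulrn_wge0.
by rewrite lerD2l.
Qed.

Lemma modulus_gt0 (x : R) : 0 < x -> 0 < f x.
Proof.
case: hf => f_ge0 f_eq0 _ _ _ x_gt0.
rewrite lt0r f_ge0 ?ltW // andbT; apply/eqP => /(f_eq0 _ (ltW x_gt0)) x0.
by rewrite x0 ltxx in x_gt0.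
Qed.

Lemma ratio_lt_modulus_ratio (p : nat) (x y : R) : (0 < p)%N -> 0 <= x -> 0 < y ->
  f x / f y < p%:R^-1 -> x / y < p%:R^-1.
Proof.
case: hf => _ _ _ f_mono _ p_gt0 x_ge0 y_gt0; rewrite !ltNge; apply: contra.
have p_gt0R : 0 < (p%:R : R) by rewrite ltr0n.
rewrite ler_pdivlMr // => y_le.
have y_le_xp : y <= x *+ p by rewrite -mulr_natr -ler_pdivrMr // mulrC.
rewrite ler_pdivlMr ?modulus_gt0 // mulrC ler_pdivrMr // mulr_natr.
exact: le_trans (f_mono _ _ (ltW y_gt0) y_le_xp) (modulus_mulrn_le x p x_ge0).
Qed.

Lemma f_density_zero_natural_density_zero (K : set nat) :
  f_density_zero f K -> natural_density_zero R K.
Proof.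
move=> fK0; apply/cvgrPdist_lt => e e_gt0.
pose p := (Num.truncn e^-1).+1.
have p_inv_lt : p%:R^-1 < e by rewrite invf_plt ?posrE ?ltr0n //; exact: truncnS_gt.
have := (cvgrPdist_lt _ _).1 fK0 p%:R^-1; rewrite invr_gt0 ltr0n => /(_ _ isT).
apply: filterS => -[|n]; first by rewrite invr0 mulr0 subrr normr0.
have [f_ge0 _ _ _ _] := hf.
rewrite !sub0r !normrN !ger0_norm ?divr_ge0 ?f_ge0 ?ler0n // => ratio_lt.
by apply: lt_trans p_inv_lt; apply: ratio_lt_modulus_ratio; rewrite ?ler0n ?ltr0n.
Qed.

Lemma f_stat_cvg_stat_cvg (u : nat -> R) (l : R) :
  f_stat_cvg f u l -> stat_cvg u l.
Proof. by move=> fu eps eps_gt0; exact/f_density_zero_natural_density_zero/fu. Qed.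

End Modulus.

Theorem theorem2p1 (R : realType) (f : R -> R) (hf : unbounded_modulus f)
  (X : Type) (rho : X -> X -> R) (hX : is_metric rho)
  (A : set X) (As : nat -> set X)
  (hA : CL rho A) (hAs : forall k, CL rho (As k)) :
  f_wijsman_stat f rho As A -> wijsman_stat rho As A.
Proof. by move=> fAs x; exact: f_stat_cvg_stat_cvg _ _ hf.1 _ _ (fAs x). Qed.
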